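(* For all $n\ge 2$, \[\left|\mathrm{Av}_n[\overline{23}14]\right|=\sum_{i=0}^{n-2}\binom{n-2}{i}A_i,\] where $A_i$ is the number of strongly monotone partitions of $[i]$ (with $A_0=1$).
   Context: For $\sigma\in S_n$, the cyclic permutation $[\sigma]$ is the set of all rotations of $\sigma$; $[S_n]$ is the set of cyclic permutations of length $n$. $[\sigma]$ contains the vincular pattern $[\overline{23}14]$ if some rotation of $\sigma$ has entries $a,b,c,d$ appearing in this order with $a,b$ adjacent and $c<a<b<d$; $\mathrm{Av}_n[\overline{23}14]$ is the set of $[\sigma]\in[S_n]$ not containing it. A set partition of $[i]$ is strongly monotone if, when its blocks are sorted so that their minimum elements are increasing, their maximum elements are also increasing. *)

From mathcomp Require Import all_boot all_order all_fingroup.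
Set Implicit Arguments. Unset Strict Implicit. Unset Printing Implicit Defensive.

(* A permutation s : 'S_n is identified with the word s(0) s(1) ... s(n-1)
   (values in {0,..,n-1}; shifting to {1..n} does not affect patterns). *)

Definition cshift n : 'S_n := perm (@ordS_inj n).

(* k-th rotation of s: the word s(k) s(k+1) ... s(n-1) s(0) ... s(k-1);
   recall (a * b) x = b (a x) for permutations *)
Definition rotation n (k : nat) (s : 'S_n) : 'S_n := (cshift n ^+ k * s)%g.

Definition cyc n (s : 'S_n) : {set 'S_n} := [set rotation (val k) s | k : 'I_n].

(* the word s contains the vincular pattern 23-1-4 (with 2,3 adjacent):
   positions i < i+1 < k < l with s k < s i < s (i+1) < s l *)
Definition contains_2314 n (s : 'S_n) : bool :=
  [exists i : 'I_n, exists j : 'I_n, exists k : 'I_n, exists l : 'I_n,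
     [&& val j == (val i).+1, j < k, k < l,
         s k < s i, s i < s j & s j < s l]].

Definition cyc_contains n (s : 'S_n) : bool :=
  [exists t in cyc s, contains_2314 t].

Definition Av_cyc n : {set {set 'S_n}} :=
  [set cyc s | s in [set s : 'S_n | ~~ cyc_contains s]].

Definition bmin i (B : {set 'I_i}) : nat := \big[minn/i]_(x in B) val x.
Definition bmax i (B : {set 'I_i}) : nat := \max_(x in B) val x.

Definition strongly_monotone i (P : {set {set 'I_i}}) : bool :=
  [forall B in P, forall C in P, (bmin B < bmin C) ==> (bmax B < bmax C)].

Definition A_sm (i : nat) : nat :=
  #|[set P : {set {set 'I_i}} | partition P [set: 'I_i] && strongly_monotone P]|.

From mathcomp Require Import all_boot all_order all_fingroup.
From mathcomp Require Import zify.
Set Implicit Arguments. Unset Strict Implicit. Unset Printing Implicit Defensive.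

(* Rotating the largest value to the last position selects one representative in each cyclic
   class, so [Av_n] is counted by the permutations ending with their maximum that avoid the
   pattern in every rotation. For these, avoidance amounts to two conditions on every ascent
   [s i < s (i+1)]: all later entries exceed [s i], and all entries lying between [i] and an
   earlier entry smaller than [s i] are smaller than [s (i+1)]. Cutting the word into its
   maximal descending runs then gives a bijection with the set partitions having the maximum
   as a singleton block and satisfying strong monotonicity except at the block of the smallest
   value; the word is recovered by listing the blocks by increasing minima, each in decreasing
   order. Removing these two special blocks leaves a strongly monotone partition of an
   arbitrary subset of the [n - 2] remaining values, whence the binomial sum. *)

Section Rotation.
Variable m : nat.
Local Notation n := m.+1.
Local Open Scope group_scope.
Implicit Types (s : 'S_n) (k : nat).

Lemma cshiftX_val k (x : 'I_n) : val ((cshift n ^+ k) x) = (x + k) %% n.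
Proof.
elim: k => [|k IH]; first by rewrite expg0 perm1 addn0 modn_small.
by rewrite expgSr permM /cshift permE /= IH -addn1 modnDml addn1 addnS.
Qed.

Lemma cshiftXn : cshift n ^+ n = 1.
Proof. by apply/permP => x; apply: val_inj; rewrite cshiftX_val perm1 modnDr modn_small. Qed.

Lemma cshiftX_modn k : cshift n ^+ k = cshift n ^+ (k %% n).
Proof. by rewrite {1}(divn_eq k n) expgD mulnC expgM cshiftXn expg1n mul1g. Qed.

Lemma rotationE k s x : rotation k s x = s ((cshift n ^+ k) x).
Proof. by rewrite /rotation permM. Qed.

Lemma rotation_at k s (o x : 'I_n) : (o + k) %% n = x -> rotation k s o = s x.
Proof. by move=> e; rewrite rotationE; congr (s _); apply: val_inj; rewrite cshiftX_val. Qed.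

Lemma rotation0 s : rotation 0 s = s.
Proof. by rewrite /rotation expg0 mul1g. Qed.

Lemma rotationD a b s : rotation a (rotation b s) = rotation (b + a) s.
Proof. by rewrite /rotation mulgA -expgD addnC. Qed.

Lemma rotation_modn k s : rotation k s = rotation (k %% n) s.
Proof. by rewrite /rotation -cshiftX_modn. Qed.

Lemma mem_cyc s : s \in cyc s.
Proof. by apply/imsetP; exists ord0; rewrite ?rotation0. Qed.

Lemma cyc_rotation_sub k s : cyc (rotation k s) \subset cyc s.
Proof.
apply/subsetP => t /imsetP [j _ ->]; apply/imsetP.
by exists (Ordinal (ltn_pmod (k + j) (ltn0Sn m))); rewrite // rotationD rotation_modn.
Qed.

Lemma cyc_rotation k s : cyc (rotation k s) = cyc s.
Proof.
apply/eqP; rewrite eqEsubset cyc_rotation_sub /=.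
have back : rotation (n - k %% n) (rotation k s) = s.
  rewrite rotationD rotation_modn {1}(divn_eq k n) -addnA subnKC; last first.
    by rewrite ltnW // ltn_mod.
  by rewrite -mulSnr modnMl rotation0.
by rewrite -{1}back cyc_rotation_sub.
Qed.

Lemma cyc_contains_rotation k s : cyc_contains (rotation k s) = cyc_contains s.
Proof. by rewrite /cyc_contains cyc_rotation. Qed.

Lemma rotation_last s : rotation (s^-1 ord_max).+1 s ord_max = ord_max.
Proof.
rewrite rotationE; have -> : (cshift n ^+ (s^-1 ord_max).+1) ord_max = s^-1 ord_max.
  by apply: val_inj; rewrite cshiftX_val /= addnS -addSn modnDl modn_small.
by rewrite permKV.
Qed.

Lemma cshiftX_last_eq (j : 'I_n) : ((cshift n ^+ j) ord_max == ord_max) = (j == 0 :> nat).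
Proof.
rewrite -val_eqE cshiftX_val /=; case: j => [[|j] hj] //=.
  by rewrite addn0 modn_small ?eqxx.
by rewrite addnS -addSn modnDl modn_small; lia.
Qed.

Definition max_last_avoiders := [set s : 'S_n | (s ord_max == ord_max) && ~~ cyc_contains s].

(* Each cyclic class has exactly one representative ending with its maximum. *)
Lemma card_Av_cyc : #|Av_cyc n| = #|max_last_avoiders|.
Proof.
have -> : Av_cyc n = (@cyc n) @: max_last_avoiders.
  apply/setP => C; apply/imsetP/imsetP => -[s]; rewrite inE.
    move=> hs ->; exists (rotation (s^-1 ord_max).+1 s); last by rewrite cyc_rotation.
    by rewrite inE rotation_last eqxx cyc_contains_rotation.
  by case/andP => _ hs ->; exists s; rewrite ?inE.
rewrite card_in_imset // => s t; rewrite !inE => /andP [/eqP hs _] /andP [/eqP ht _] e.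
have /imsetP [j _ et] : t \in cyc s by rewrite e mem_cyc.
rewrite {}et in ht *.
have : (cshift n ^+ j) ord_max == ord_max.
  by apply/eqP/(@perm_inj _ s); rewrite -rotationE ht hs.
by rewrite cshiftX_last_eq => /eqP j0; rewrite (_ : val j = 0) ?rotation0.
Qed.

End Rotation.

(* Where the cut of a rotation by [k] can fall relative to the positions [i < i.+1 < c < d]. *)
Lemma rotated_positions_cases n k i c d : k < n -> i.+1 < c -> c < d -> d < n ->
  let r x := (x + k) %% n in
  r i.+1 = (r i).+1 /\ (r i.+1 < r c \/ r c < r d < r i) \/ r i = n.-1.
Proof.
move=> hk hic hcd hdn r; rewrite /r.
have modn_lt2 x : x < n + n -> x %% n = if x < n then x else x - n.
  move=> hx; case: ifP => h; first by rewrite modn_small.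
  by rewrite -{1}(@subnK n x) ?modnDr ?modn_small; lia.
rewrite !modn_lt2; try lia.
by case: ifP => ?; case: ifP => ?; case: ifP => ?; case: ifP => ?; lia.
Qed.

Lemma ltn_ord_maxE k (x : 'I_k.+1) : (x < k) = (x != ord_max).
Proof. by rewrite -(inj_eq val_inj) /= ltn_neqAle -ltnS ltn_ord andbT. Qed.

Section AscentConditions.
Variable m : nat.
Local Notation n := m.+1.
Implicit Types (s : 'S_n) (x y : 'I_n).

Definition right_of_ascent_above s := forall i j c : 'I_n,
  j = i.+1 :> nat -> j < c -> s i < s j -> s i < s c.

Definition left_of_ascent_below s := forall c d i j : 'I_n,
  j = i.+1 :> nat -> c < d -> d < i -> s c < s i -> s i < s j -> s d < s j.

Lemma contains_2314P s :
  reflect (exists i j k l : 'I_n,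
             [/\ j = i.+1 :> nat, j < k < l, s k < s i, s i < s j & s j < s l])
          (contains_2314 s).
Proof.
apply: (iffP existsP) => [[i /existsP [j /existsP [k /existsP [l]]]]|[i [j [k [l]]]]].
  case/and4P => /eqP hj hjk hkl /and3P [h1 h2 h3].
  by exists i, j, k, l; rewrite hjk hkl h1 h2 h3.
case=> hj /andP [hjk hkl] h1 h2 h3; exists i; apply/existsP; exists j.
apply/existsP; exists k; apply/existsP; exists l.
by rewrite hjk hkl h1 h2 h3 !andbT; exact/eqP.
Qed.

Section MaxLast.
Variable s : 'S_n.
Hypothesis s_last : s ord_max = ord_max.

Lemma lt_last_of_value_lt x y : s x < s y -> x < m.
Proof.
by rewrite ltn_ord_maxE => hxy; apply: contraTneq hxy => ->; rewrite s_last -leqNgt leq_ord.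
Qed.

Lemma value_lt_last x : x < m -> s x < m.
Proof.
by rewrite !ltn_ord_maxE; apply: contra_neq => e; apply: (@perm_inj _ s); rewrite e s_last.
Qed.

Lemma avoid_right_of_ascent_above : ~~ cyc_contains s -> right_of_ascent_above s.
Proof.
move=> avoid i j c hj hjc hij; case: (ltngtP (s i) (s c)) => // [hci|/val_inj/perm_inj eic].
  case/negP: avoid; apply/existsP; exists s; rewrite mem_cyc; apply/contains_2314P.
  have hcm := lt_last_of_value_lt hci.
  have hjm : s j < m by apply: value_lt_last; lia.
  by exists i, j, c, ord_max; rewrite s_last; split => //=; lia.
by move: hjc; rewrite -eic hj; lia.
Qed.

End MaxLast.

Lemma avoid_left_of_ascent_below s : ~~ cyc_contains s -> left_of_ascent_below s.
Proof.
move=> avoid c d i j hj hcd hdi hci hij.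
case: (ltngtP (s d) (s j)) => // [hjd | /val_inj/perm_inj edj]; last first.
  by move: hdi; rewrite edj hj; lia.
case/negP: avoid; apply/existsP; exists (rotation i s).
rewrite (_ : rotation i s \in cyc s); last by apply/imsetP; exists i.
apply/contains_2314P.
have := ltn_ord j; rewrite hj => hin.
have o0 : 0 < n by [].
have o1 : 1 < n by lia.
have oc : n - i + c < n by lia.
have od : n - i + d < n by lia.
have r0 : rotation i s (Ordinal o0) = s i by apply: rotation_at; rewrite /= add0n modn_small.
have r1 : rotation i s (Ordinal o1) = s j by apply: rotation_at; rewrite /= hj add1n modn_small.
have rc : rotation i s (Ordinal oc) = s c.
  by apply: rotation_at; rewrite /= -addnA [c + i]addnC addnA subnK ?modnDl ?modn_small; lia.
have rd : rotation i s (Ordinal od) = s d.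
  by apply: rotation_at; rewrite /= -addnA [d + i]addnC addnA subnK ?modnDl ?modn_small; lia.
exists (Ordinal o0), (Ordinal o1), (Ordinal oc), (Ordinal od).
by rewrite r0 r1 rc rd; split => //=; lia.
Qed.

(* In [s] itself, an occurrence in a rotation starts with an ascent [i, i.+1] whose [1] lies to
   its right, or whose [1] and [4] both lie to its left; [i] cannot be the last position, which
   holds the maximum. *)
Lemma ascent_conditions_avoid s : s ord_max = ord_max ->
  right_of_ascent_above s -> left_of_ascent_below s -> ~~ cyc_contains s.
Proof.
move=> s_last right left; apply/negP => /existsP [_ /andP [/imsetP [k _ ->]]].
case/contains_2314P => i [j [c [d [hj /andP [hjc hcd]]]]]; rewrite !rotationE.
have hic : i.+1 < c by rewrite -hj.
have := rotated_positions_cases (ltn_ord k) hic hcd (ltn_ord d).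
rewrite /= -hj -!cshiftX_val.
set i' := (cshift n ^+ k)%g i; set j' := (cshift n ^+ k)%g j.
set c' := (cshift n ^+ k)%g c; set d' := (cshift n ^+ k)%g d.
case=> [[hj' [hjc'|/andP [hcd' hdi']]]|hi'] hci hij hjd.
- by have := right i' j' c' hj' hjc' hij; lia.
- by have := left c' d' i' j' hj' hcd' hdi' hci hij; lia.
- by have := lt_last_of_value_lt s_last hij; rewrite hi'; lia.
Qed.

Lemma cyc_avoidsP s : s ord_max = ord_max ->
  reflect (right_of_ascent_above s /\ left_of_ascent_below s) (~~ cyc_contains s).
Proof.
move=> s_last; apply: (iffP idP) => [avoid|[right left]].
  by split; [exact: avoid_right_of_ascent_above | exact: avoid_left_of_ascent_below].
exact: ascent_conditions_avoid.
Qed.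

End AscentConditions.

Section BlockExtrema.
Variable i : nat.
Implicit Types (B : {set 'I_i}) (x : 'I_i).

Lemma bmin_le B x : x \in B -> bmin B <= x.
Proof. by move=> xB; exact: (Order.TotalTheory.bigmin_le_cond i val xB). Qed.

Lemma bmin_mem B : B != set0 -> exists2 x, x \in B & bmin B = x.
Proof.
case/set0Pn => y yB.
have le_i x : x \in B -> x <= i by move=> _; exact: ltnW.
by have [x xB e] := Order.TotalTheory.eq_bigmin y (fun x => x \in B) val yB le_i; exists x.
Qed.

Lemma bmin_ge B k : B != set0 -> (forall x, x \in B -> k <= x) -> k <= bmin B.
Proof. by move=> /bmin_mem [x xB ->]; apply. Qed.

Lemma bmax_ge B x : x \in B -> x <= bmax B.
Proof. exact: leq_bigmax_cond. Qed.

Lemma bmax_mem B : B != set0 -> exists2 x, x \in B & bmax B = x.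
Proof. by rewrite -card_gt0 => /(eq_bigmax_cond val) [x xB e]; exists x. Qed.

Lemma bmax_le B k : (forall x, x \in B -> x <= k) -> bmax B <= k.
Proof. by move=> h; apply/bigmax_leqP. Qed.

Lemma set1_neq0 x : [set x] != set0.
Proof. by apply/set0Pn; exists x; rewrite set11. Qed.

Lemma bmin_set1 x : bmin [set x] = x.
Proof. by have [y /set1P ->] := bmin_mem (set1_neq0 x). Qed.

Lemma bmax_set1 x : bmax [set x] = x.
Proof. by have [y /set1P ->] := bmax_mem (set1_neq0 x). Qed.

End BlockExtrema.

Section Listing.
Variables (n : nat) (f : 'I_n -> nat).
Implicit Types (u v w : 'I_n).
Local Open Scope group_scope.

Definition before w v := (f w < f v) || ((f w == f v) && (v < w)).

Lemma before_irr v : ~~ before v v.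
Proof. by rewrite /before ltnn eqxx ltnn. Qed.

Lemma before_trans u v w : before u v -> before v w -> before u w.
Proof.
by rewrite /before => /orP [?|/andP [/eqP ? ?]] /orP [?|/andP [/eqP ? ?]]; apply/orP; lia.
Qed.

Lemma before_total v w : v != w -> before v w || before w v.
Proof.
move=> ne; have {ne} : nat_of_ord v != w := ne.
rewrite /before; case: (ltngtP (f v) (f w)) => //= _; lia.
Qed.

Definition before_rank v := #|[set w | before w v]|.

Lemma before_rank_lt v w : before v w -> before_rank v < before_rank w.
Proof.
move=> h; apply: proper_card; rewrite properE; apply/andP; split.
  by apply/subsetP => u; rewrite !inE => /before_trans; apply.
by apply/subsetPn; exists v; rewrite !inE ?before_irr.
Qed.

Lemma before_rank_ltE v w : (before_rank v < before_rank w) = before v w.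
Proof.
apply/idP/idP => [h|]; last exact: before_rank_lt.
case: (eqVneq v w) => [e|ne]; first by rewrite e ltnn in h.
by case/orP: (before_total ne) => // /before_rank_lt; lia.
Qed.

Lemma before_rank_bound v : before_rank v < n.
Proof.
rewrite -[n in _ < n]card_ord -cardsT; apply: proper_card; rewrite properE subsetT /=.
by apply/subsetPn; exists v; rewrite ?inE // before_irr.
Qed.

Lemma before_rank_inj : injective (fun v => Ordinal (before_rank_bound v)).
Proof.
move=> v w [] e; apply/eqP; apply: contraT => ne.
by case/orP: (before_total ne) => /before_rank_lt; rewrite e ltnn.
Qed.

Definition listing : 'S_n := (perm before_rank_inj)^-1.

Lemma listingV v : val (listing^-1 v) = before_rank v.
Proof. by rewrite /listing invgK permE. Qed.

Lemma listingV_ltE v w : (listing^-1 v < listing^-1 w) = before v w.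
Proof. by rewrite !listingV before_rank_ltE. Qed.

Lemma card_permV_lt (s : 'S_n) k : k <= n -> #|[set w | s^-1 w < k]| = k.
Proof.
move=> hk; have -> : [set w | s^-1 w < k] = s @: [set widen_ord hk j | j : 'I_k].
  apply/setP => w; rewrite inE; apply/idP/imsetP => [h|[p /imsetP [j _ ->] ->]].
    by exists (s^-1 w); rewrite ?permKV //; apply/imsetP; exists (Ordinal h) => //; apply: val_inj.
  by rewrite permK /=.
rewrite card_imset; last exact: perm_inj.
by rewrite card_imset ?card_ord // => a b /(congr1 val) /= /val_inj.
Qed.

Lemma listing_eq (s : 'S_n) : (forall v w, before v w = (s^-1 v < s^-1 w)) -> listing = s.
Proof.
move=> H; apply: (can_inj (@invgK _)); apply/permP => v; apply: val_inj.
rewrite listingV /before_rank (eq_card (B := [set w | s^-1 w < s^-1 v])).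
  by rewrite card_permV_lt // ltnW.
by move=> w; rewrite !inE H.
Qed.

End Listing.

Section Runs.
Variables (m : nat) (s : 'S_m.+1).
Local Notation n := m.+1.
Implicit Types (p q t : nat) (u v w : 'I_n).

(* Positions are natural numbers; [val_at t] is the junk value [s 0] when [t >= n]. *)
Definition val_at t : nat := s (inord t).
Definition ascent t := (t.+1 < n) && (val_at t < val_at t.+1).
Definition run_index p := count ascent (iota 0 p).
Definition pos v : nat := (s^-1)%g v.
Definition run_of v := run_index (pos v).

(* The blocks are the maximal descending runs of the word of [s]. *)
Definition run_partition := preim_partition run_of [set: 'I_n].

Lemma val_atE v : val_at v = s v.
Proof. by rewrite /val_at inord_val. Qed.

Lemma val_at_pos v : val_at (pos v) = v.
Proof. by rewrite val_atE permKV. Qed.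

Lemma pos_val_at t : t < n -> pos (s (inord t)) = t.
Proof. by move=> ht; rewrite /pos permK inordK. Qed.

Lemma val_at_inj t1 t2 : t1 < n -> t2 < n -> val_at t1 = val_at t2 -> t1 = t2.
Proof. by move=> h1 h2 /val_inj /perm_inj e; rewrite -(inordK h1) -(inordK h2) e. Qed.

Lemma run_indexS p : run_index p.+1 = run_index p + ascent p.
Proof. by rewrite /run_index -addn1 iotaD count_cat /= addn0. Qed.

Lemma run_indexD p d : run_index (p + d) = run_index p + count ascent (iota p d).
Proof. by rewrite /run_index iotaD count_cat. Qed.

Lemma leq_run_index p q : p <= q -> run_index p <= run_index q.
Proof. by move=> h; rewrite -(subnKC h) run_indexD leq_addr. Qed.

Lemma run_index_eqP p q : p <= q ->
  reflect (forall t, p <= t < q -> ~~ ascent t) (run_index p == run_index q).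
Proof.
move=> h; have -> : run_index q = run_index p + count ascent (iota p (q - p)).
  by rewrite -run_indexD subnKC.
rewrite -{1}[run_index p]addn0 eqn_add2l.
rewrite eq_sym -leqn0 leqNgt -has_count.
by apply: (iffP hasPn) => H t ht; apply: H; move: ht; rewrite mem_iota subnKC.
Qed.

Lemma pos_lt_of_run_lt u v : run_of u < run_of v -> pos u < pos v.
Proof. by apply: contraTT; rewrite -!leqNgt => /leq_run_index. Qed.

Lemma run_index_step p q : p <= q -> run_index p < run_index q ->
  exists t, [/\ p <= t < q, ascent t & run_index t = run_index p].
Proof.
move=> h; rewrite -(subnKC h); elim: (q - p) => [|d IH]; first by rewrite addn0 ltnn.
rewrite addnS run_indexS.
case: (ltnP (run_index p) (run_index (p + d))) => [/IH [t [ht asct et]] _|h'].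
  by exists t; split => //; lia.
have e : run_index (p + d) = run_index p.
  by apply/eqP; rewrite eqn_leq h' leq_run_index ?leq_addr.
rewrite e; case hasc : (ascent (p + d)); last by rewrite addn0 ltnn.
by exists (p + d); split => //; lia.
Qed.

Lemma run_decreasing p q : p <= q -> q < n -> run_index p = run_index q -> val_at q <= val_at p.
Proof.
move=> h hq /eqP /(run_index_eqP h) H; move: hq H; rewrite -(subnKC h).
elim: (q - p) => [|d IH] hq H; first by rewrite addn0.
have hq' : (p + d).+1 < n by rewrite -addnS.
have := H (p + d); rewrite /ascent hq' /= -leqNgt addnS => /(_ ltac:(lia)) desc.
by apply: leq_trans desc _; apply: IH => [|t ht]; [lia | apply: H; lia].
Qed.

Lemma run_strictly_decreasing p q : p < q -> q < n -> run_index p = run_index q ->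
  val_at q < val_at p.
Proof.
move=> h hq e; rewrite ltn_neqAle run_decreasing ?(ltnW h) // andbT.
have hp := ltn_trans h hq.
by apply: contraTneq h => /(val_at_inj hq hp) ->; rewrite ltnn.
Qed.

Lemma run_partitionP : partition run_partition [set: 'I_n].
Proof. exact: preim_partitionP. Qed.

Lemma mem_pblock_run_partition u v : (v \in pblock run_partition u) = (run_of u == run_of v).
Proof.
rewrite /run_partition /preim_partition pblock_equivalence_partition ?inE //.
by split => // /eqP ->.
Qed.

End Runs.

Definition block_min n (Q : {set {set 'I_n}}) x := bmin (pblock Q x).
Definition block_max n (Q : {set {set 'I_n}}) x := bmax (pblock Q x).

Section FullPartition.
Variables (n : nat) (Q : {set {set 'I_n}}).
Hypothesis Q_part : partition Q [set: 'I_n].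
Implicit Types (x y : 'I_n).

Lemma full_partition_triv : trivIset Q.
Proof. exact: partition_trivIset Q_part. Qed.

Lemma in_cover_full x : x \in cover Q.
Proof. by rewrite (cover_partition Q_part) inE. Qed.

Lemma mem_pblock_self x : x \in pblock Q x.
Proof. by rewrite mem_pblock in_cover_full. Qed.

Lemma pblock_full_mem x : pblock Q x \in Q.
Proof. exact/pblock_mem/in_cover_full. Qed.

Lemma pblock_neq0 x : pblock Q x != set0.
Proof. by apply/set0Pn; exists x; exact: mem_pblock_self. Qed.

Lemma eq_pblock_full x y : (pblock Q x == pblock Q y) = (y \in pblock Q x).
Proof. by rewrite eq_pblock ?full_partition_triv ?in_cover_full. Qed.

Lemma pblock_of_mem x y : y \in pblock Q x -> pblock Q y = pblock Q x.
Proof. exact: same_pblock full_partition_triv. Qed.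

Lemma block_of B : B \in Q -> exists x, B = pblock Q x.
Proof.
move=> hB; have /set0Pn [x hx] : B != set0 by apply: partition_neq0 Q_part hB.
by exists x; rewrite (def_pblock full_partition_triv hB hx).
Qed.

Lemma block_min_le x : block_min Q x <= x.
Proof. exact/bmin_le/mem_pblock_self. Qed.

Lemma block_max_ge x : x <= block_max Q x.
Proof. exact/bmax_ge/mem_pblock_self. Qed.

Lemma eq_block_min x y : (block_min Q x == block_min Q y) = (pblock Q x == pblock Q y).
Proof.
apply/eqP/eqP => [e|e]; last by rewrite /block_min e.
have [u hu eu] := bmin_mem (pblock_neq0 x); have [u' hu' eu'] := bmin_mem (pblock_neq0 y).
have euu : u = u' by apply: val_inj; rewrite /= -eu -eu'.
by rewrite -(pblock_of_mem hu) -(pblock_of_mem hu') euu.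
Qed.

End FullPartition.

Section RunPartitionOfAvoider.
Variables (m : nat) (s : 'S_m.+1).
Local Notation n := m.+1.
Hypotheses (s_last : s ord_max = ord_max)
  (right : right_of_ascent_above s) (left : left_of_ascent_below s).
Local Notation Q := (run_partition s).
Local Notation val_at := (val_at s).
Local Notation pos := (pos s).
Local Notation run_of := (run_of s).
Local Notation run_index := (run_index s).
Implicit Types (u v w : 'I_n).

Let Q_part : partition Q [set: 'I_n] := run_partitionP s.

Lemma eq_pblock_run_partition u v : (pblock Q u == pblock Q v) = (run_of u == run_of v).
Proof. by rewrite eq_pblock_full // mem_pblock_run_partition. Qed.

Lemma right_of_ascent_above_at t c : ascent s t -> t.+1 < c -> c < n -> val_at t < val_at c.
Proof.
rewrite /ascent /val_at => /andP [ht asc] hc hcn.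
by apply: (right (j := inord t.+1)); rewrite ?inordK //; lia.
Qed.

Lemma left_of_ascent_below_at c d i : c < d < i -> ascent s i ->
  val_at c < val_at i -> val_at d < val_at i.+1.
Proof.
rewrite /ascent /val_at => /andP [hcd hdi] /andP [hi asc] hci.
by apply: (left (c := inord c) (i := inord i)); rewrite ?inordK //; lia.
Qed.

Lemma block_min_lt_of_run_lt v w : run_of v < run_of w -> block_min Q v < block_min Q w.
Proof.
move=> h; have hvw := ltnW (pos_lt_of_run_lt h).
have [t [/andP [hvt htw] asc et]] := run_index_step hvw h.
have htn : t < n := ltn_trans htw (ltn_ord _).
have hx : s (inord t) \in pblock Q v by rewrite mem_pblock_run_partition /run_of pos_val_at // et.
apply: (leq_ltn_trans (bmin_le hx)); rewrite -/(val_at t).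
apply: bmin_ge; first exact: pblock_neq0.
move=> u; rewrite mem_pblock_run_partition => /eqP hu; rewrite -(val_at_pos s u).
have htu : t < pos u.
  by rewrite ltnNge; apply/negP => /(leq_run_index s); rewrite /run_of in h hu; lia.
case: (ltngtP (pos u) t.+1) => [|hu1|->]; [lia | | by case/andP: asc].
exact: right_of_ascent_above_at (ltn_ord _).
Qed.

Lemma before_run_partition v w : before (block_min Q) w v = (pos w < pos v).
Proof.
rewrite /before; case: (ltngtP (run_of w) (run_of v)) => h.
- by rewrite block_min_lt_of_run_lt // pos_lt_of_run_lt.
- have hk := block_min_lt_of_run_lt h; rewrite ltnNge (ltnW hk) (gtn_eqF hk) /=.
  by apply/esym/negbTE; rewrite -leqNgt ltnW // pos_lt_of_run_lt.
- have e : pblock Q w = pblock Q v by apply/eqP; rewrite eq_pblock_run_partition h.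
  rewrite /block_min e ltnn eqxx /=.
  case: (ltngtP (pos w) (pos v)) => hp.
  + by have := run_strictly_decreasing hp (ltn_ord _) h; rewrite !val_at_pos.
  + have := run_strictly_decreasing hp (ltn_ord _) (esym h).
    by rewrite !val_at_pos => ?; apply/negbTE; lia.
  + by rewrite (_ : w = v) ?ltnn //; apply: (@perm_inj _ s^-1); exact: val_inj.
Qed.

Lemma listing_run_partition : listing (block_min Q) = s.
Proof. by apply: listing_eq => v w; rewrite before_run_partition. Qed.

Lemma run_partition_last : [set ord_max] \in Q.
Proof.
have pos_last : pos ord_max = m by rewrite /pos -{1}s_last permK.
suff <- : pblock Q ord_max = [set ord_max] by exact: pblock_full_mem.
apply/setP => y; rewrite mem_pblock_run_partition inE; apply/idP/eqP => [/eqP e|->] //.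
have hy : pos y <= pos ord_max by rewrite pos_last -ltnS ltn_ord.
have := run_decreasing hy (ltn_ord _) (esym e).
by rewrite !val_at_pos => ley; apply: val_inj; apply/eqP; rewrite eqn_leq ley andbT -ltnS ltn_ord.
Qed.

Lemma run_lt_of_block_min_lt v w : block_min Q v < block_min Q w -> run_of v < run_of w.
Proof.
move=> h; case: (ltngtP (run_of v) (run_of w)) => // [/block_min_lt_of_run_lt | e]; first lia.
have /eqP e' : pblock Q v == pblock Q w by rewrite eq_pblock_run_partition e.
by rewrite /block_min e' ltnn in h.
Qed.

Lemma run_start u : exists f, [/\ run_index f = run_of u, block_max Q u = val_at f &
  forall p, p < f -> run_index p != run_of u].
Proof.
have [f /eqP hf fmin] := ex_minnP (ex_intro (fun p => run_index p == run_of u) (pos u) (eqxx _)).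
have f_first p : p < f -> run_index p != run_of u.
  by move=> hp; apply: contraTneq hp => /eqP/fmin; lia.
have fu : f <= pos u by exact: fmin.
have fn : f < n := leq_ltn_trans fu (ltn_ord _).
exists f; split => //; apply/eqP; rewrite eqn_leq; apply/andP; split.
  apply: bmax_le => u'; rewrite mem_pblock_run_partition => /eqP hu'.
  rewrite -(val_at_pos s u'); apply: run_decreasing (ltn_ord _) _; rewrite ?hf ?hu' //.
  by rewrite leqNgt; apply/negP => /f_first; rewrite hu' eqxx.
by apply: (bmax_ge (x := s (inord f))); rewrite mem_pblock_run_partition /run_of pos_val_at // hf.
Qed.

Lemma run_of0_lt v : ord0 \notin pblock Q v -> run_of ord0 < run_of v.
Proof.
move=> h0; case: (ltngtP (run_of ord0) (run_of v)) => // h'.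
  have : block_min Q ord0 <= 0 := block_min_le Q_part ord0.
  by have := block_min_lt_of_run_lt h'; lia.
by move: h0; rewrite mem_pblock_run_partition h' eqxx.
Qed.

(* Otherwise the run of [v], starting at position [g], would begin with a larger entry than the
   run of [w], starting at [i.+1]; as the entry [0] occurs before [g], this contradicts
   [left_of_ascent_below] at the ascent [i]. *)
Lemma run_partition_sm v w : ord0 \notin pblock Q v ->
  block_min Q v < block_min Q w -> block_max Q v < block_max Q w.
Proof.
move=> /run_of0_lt h0v /run_lt_of_block_min_lt hvw.
have [g [g_run -> _]] := run_start v; have [[|i] [f_run -> f_first]] := run_start w.
  by move: hvw; rewrite -f_run.
have hgi : g <= i.
  by rewrite leqNgt; apply/negP => /(leq_run_index s); rewrite f_run g_run; lia.
have asc : ascent s i.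
  have := f_first i (ltnSn i); rewrite -f_run run_indexS.
  by case: (ascent s i); rewrite ?addn0 ?eqxx.
have hi1 : i.+1 < n by case/andP: asc.
rewrite ltnNge; apply/negP => hle.
have gn : g < n by lia.
have hlt : val_at i.+1 < val_at g.
  by rewrite ltn_neqAle hle andbT; apply/negP => /eqP /(val_at_inj hi1 gn); lia.
have {}hgi : g < i.
  by rewrite ltn_neqAle hgi andbT; apply: contraTneq hlt => ->; case/andP: asc => _; lia.
have h0g : pos ord0 < g.
  by rewrite ltnNge; apply: contraTN h0v => /(leq_run_index s); rewrite -leqNgt g_run.
have i0 : val_at i != val_at (pos ord0).
  apply/eqP => /(val_at_inj (ltn_trans (ltnSn i) hi1) (ltn_ord _)) e.
  by rewrite /pos -e in h0g; lia.
have h0i : val_at (pos ord0) < val_at i by move: i0; rewrite val_at_pos /= lt0n.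
by have := left_of_ascent_below_at (_ : pos ord0 < g < i) asc h0i; lia.
Qed.

End RunPartitionOfAvoider.

Definition almost_sm m (Q : {set {set 'I_m.+1}}) :=
  [&& partition Q [set: 'I_m.+1], [set ord_max] \in Q &
   [forall B in Q, forall C in Q, ((ord0 \notin B) && (bmin B < bmin C)) ==> (bmax B < bmax C)]].

Lemma run_partition_almost_sm m (s : 'S_m.+1) : s ord_max = ord_max ->
  right_of_ascent_above s -> left_of_ascent_below s -> almost_sm (run_partition s).
Proof.
move=> s_last right left; have Q_part := run_partitionP s.
rewrite /almost_sm Q_part run_partition_last //=.
apply/forall_inP => B /(block_of Q_part) [v ->]; apply/forall_inP => C /(block_of Q_part) [w ->].
by apply/implyP => /andP [h0 h]; exact: run_partition_sm.
Qed.

Section ListingOfPartition.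
Variables (m : nat) (Q : {set {set 'I_m.+1}}).
Hypothesis Q_asm : almost_sm Q.
Local Notation n := m.+1.
Local Notation s := (listing (block_min Q)).
Local Notation precedes := (before (block_min Q)).
Implicit Types (u v w p q : 'I_n).

Let Q_part : partition Q [set: 'I_n].
Proof. by case/and3P: Q_asm. Qed.

Lemma beforeE v w : precedes v w =
  if pblock Q v == pblock Q w then w < v else block_min Q v < block_min Q w.
Proof.
rewrite /before -eq_block_min //.
by case: eqP => [-> | ne]; rewrite ?ltnn //= orbF.
Qed.

Lemma before_listing v w : precedes v w = ((s^-1)%g v < (s^-1)%g w).
Proof. by rewrite listingV_ltE. Qed.

Lemma listing_between p q u : q = p.+1 :> nat -> precedes (s p) u -> precedes u (s q) -> False.
Proof. by rewrite !before_listing !permK => ->; lia. Qed.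

Lemma listing_same_block p q : p < q -> pblock Q (s p) = pblock Q (s q) -> s q < s p.
Proof.
move=> hpq e; move: hpq; rewrite -(permK s p) -(permK s q) -before_listing.
by rewrite beforeE e eqxx !permK.
Qed.

Lemma listing_boundary p q : q = p.+1 :> nat -> pblock Q (s p) != pblock Q (s q) ->
  block_min Q (s p) < block_min Q (s q).
Proof.
move=> hq ne; have : precedes (s p) (s q) by rewrite before_listing !permK hq.
by rewrite beforeE (negbTE ne).
Qed.

Lemma listing_block_last p q : q = p.+1 :> nat -> pblock Q (s p) != pblock Q (s q) ->
  s p = block_min Q (s p) :> nat.
Proof.
move=> hq ne; have [u hu eu] := bmin_mem (pblock_neq0 Q_part (s p)).
have eb := pblock_of_mem Q_part hu; rewrite /block_min eu.
case: (eqVneq u (s p)) => [-> // | neu]; exfalso; apply: (listing_between hq (u := u)).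
  rewrite beforeE eb eqxx ltn_neqAle (inj_eq val_inj) neu /= -eu.
  exact: block_min_le.
by rewrite beforeE eb (negbTE ne) /block_min eb; exact: listing_boundary.
Qed.

Lemma listing_block_first p q : q = p.+1 :> nat -> pblock Q (s p) != pblock Q (s q) ->
  s q = block_max Q (s q) :> nat.
Proof.
move=> hq ne; have [u hu eu] := bmax_mem (pblock_neq0 Q_part (s q)).
have eb := pblock_of_mem Q_part hu; rewrite /block_max eu.
case: (eqVneq u (s q)) => [-> // | neu]; exfalso; apply: (listing_between hq (u := u)).
  by rewrite beforeE eb (negbTE ne) /block_min eb; exact: listing_boundary.
rewrite beforeE eb eqxx ltn_neqAle (inj_eq val_inj) eq_sym neu /= -eu.
exact: block_max_ge.
Qed.

Lemma ascent_listingE t : t.+1 < n ->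
  ascent s t = (pblock Q (s (inord t)) != pblock Q (s (inord t.+1))).
Proof.
move=> ht; have hq : (inord t.+1 : 'I_n) = (inord t : 'I_n).+1 :> nat by rewrite !inordK //; lia.
rewrite /ascent ht /val_at; case: eqP => [e | /eqP ne] /=.
  by rewrite ltnNge ltnW // listing_same_block // hq.
rewrite (listing_block_last hq ne).
exact: leq_trans (listing_boundary hq ne) (block_min_le Q_part _).
Qed.

Lemma before_block_min v w : precedes v w -> block_min Q v <= block_min Q w.
Proof. by case/orP => [/ltnW | /andP [/eqP -> _]]. Qed.

Lemma listing_block_interval a b c : a <= b <= c -> c < n ->
  pblock Q (s (inord a)) = pblock Q (s (inord c)) ->
  pblock Q (s (inord b)) = pblock Q (s (inord a)).
Proof.
move=> /andP [hab hbc] hc e; apply/eqP; rewrite -eq_block_min //.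
have le_listing x y : x <= y -> y < n -> block_min Q (s (inord x)) <= block_min Q (s (inord y)).
  rewrite leq_eqVlt => /orP [/eqP -> // | hxy] hy; apply: before_block_min.
  by rewrite before_listing !permK !inordK //; lia.
have : block_min Q (s (inord a)) = block_min Q (s (inord c)) by rewrite /block_min e.
by have := le_listing _ _ hab (leq_ltn_trans hbc hc); have := le_listing _ _ hbc hc; lia.
Qed.

Lemma eq_pblock_listing (p d : nat) : p + d < n ->
  (pblock Q (s (inord p)) == pblock Q (s (inord (p + d)))) =
  (run_index s p == run_index s (p + d)).
Proof.
elim: d => [|d IH] hd; first by rewrite !addn0 !eqxx.
have hd' : (p + d).+1 < n by rewrite -addnS.
rewrite addnS run_indexS ascent_listingE //.
case: (eqVneq (pblock Q (s (inord (p + d)))) (pblock Q (s (inord (p + d).+1)))) => [<- | ne] /=.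
  by rewrite addn0 IH //; lia.
have := leq_run_index s (leq_addr d p); rewrite addn1 => le_run.
rewrite (_ : (_ == _.+1) = false); last by apply/negbTE; lia.
apply/negbTE/eqP => e; move/eqP: ne; apply; rewrite -e.
by apply: listing_block_interval e => //; rewrite leq_addr /=.
Qed.

Lemma eq_run_of_listing x y : (run_of s x == run_of s y) = (pblock Q x == pblock Q y).
Proof.
wlog h : x y / pos s x <= pos s y.
  move=> H; case: (leqP (pos s x) (pos s y)) => [/H // | /ltnW /H].
  by rewrite eq_sym => ->; rewrite eq_sym.
have inord_pos z : s (inord (pos s z)) = z by rewrite /pos inord_val permKV.
by rewrite /run_of -(subnKC h) -eq_pblock_listing subnKC ?ltn_ord // !inord_pos.
Qed.

Lemma run_partition_listing : run_partition s = Q.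
Proof.
rewrite -[RHS](preim_partition_pblock Q_part) /run_partition /preim_partition.
rewrite /equivalence_partition; apply: eq_imset => x; apply/setP => y.
by rewrite !inE eq_run_of_listing.
Qed.

Lemma listing_last : s ord_max = ord_max.
Proof.
have last_block : pblock Q ord_max = [set ord_max].
  by case/and3P: Q_asm => _ hmax _; exact: def_pblock (full_partition_triv Q_part) hmax (set11 _).
have min_last : block_min Q ord_max = m by rewrite /block_min last_block bmin_set1.
suff e : (s^-1)%g ord_max = ord_max by rewrite -{1}e permKV.
apply: val_inj; rewrite listingV /= /before_rank (eq_card (B := [set~ ord_max])).
  by rewrite cardsC1 card_ord.
move=> w; rewrite !inE /before min_last.
case: (eqVneq w ord_max) => [-> | ne]; first by rewrite min_last !ltnn andbF.
have w_lt : w < m by rewrite ltn_ord_maxE.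
by rewrite (leq_ltn_trans (block_min_le Q_part w) w_lt).
Qed.

Lemma listing_ascent_boundary (i j : 'I_n) : j = i.+1 :> nat -> s i < s j ->
  pblock Q (s i) != pblock Q (s j).
Proof.
move=> hj hij; have lt_ij : i < j by rewrite hj.
by apply/eqP => /(listing_same_block lt_ij) /(ltn_trans hij); rewrite ltnn.
Qed.

Lemma listing_right : right_of_ascent_above s.
Proof.
move=> i j c hj hjc hij; have ne := listing_ascent_boundary hj hij.
have : precedes (s i) (s c) by rewrite before_listing !permK; lia.
have i_min := listing_block_last hj ne; have c_min := block_min_le Q_part (s c).
rewrite beforeE; case: eqP => [e | _ min_lt]; last by rewrite i_min; exact: leq_trans min_lt c_min.
have : block_min Q (s c) = s i by rewrite i_min /block_min e.
lia.
Qed.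

Lemma almost_sm_block_max v w : ord0 \notin pblock Q v ->
  block_min Q v < block_min Q w -> block_max Q v < block_max Q w.
Proof.
move=> h0 h; case/and3P: Q_asm => _ _ /forall_inP /(_ _ (pblock_full_mem Q_part v)).
by move/forall_inP/(_ _ (pblock_full_mem Q_part w)); rewrite h0 h.
Qed.

Lemma listing_left : left_of_ascent_below s.
Proof.
move=> c d i j hj hcd hdi hci hij; have ne := listing_ascent_boundary hj hij.
rewrite ltnNge; apply/negP => hjd.
have : precedes (s c) (s d) by rewrite before_listing !permK.
rewrite beforeE; case: eqP => [_ | _ min_cd]; first by lia.
have d0 : ord0 \notin pblock Q (s d).
  by apply/negP => h0; have : block_min Q (s d) <= 0 := bmin_le h0; lia.
have min_dj : block_min Q (s d) < block_min Q (s j).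
  apply: leq_ltn_trans (listing_boundary hj ne); apply: before_block_min.
  by rewrite before_listing !permK.
have := almost_sm_block_max d0 min_dj; rewrite -(listing_block_first hj ne).
by have := block_max_ge Q_part (s d); lia.
Qed.

Lemma listing_max_last_avoider : s \in max_last_avoiders m.
Proof.
rewrite inE listing_last eqxx /=.
exact: ascent_conditions_avoid listing_last listing_right listing_left.
Qed.

End ListingOfPartition.

Lemma card_almost_sm m : #|[set Q : {set {set 'I_m.+1}} | almost_sm Q]| = #|max_last_avoiders m|.
Proof.
have -> : max_last_avoiders m = (fun Q => listing (block_min Q)) @: [set Q | almost_sm Q].
  apply/setP => s; apply/idP/imsetP => [|[Q]]; last first.
    by rewrite inE => hQ ->; exact: listing_max_last_avoider.
  rewrite inE => /andP [/eqP s_last /(cyc_avoidsP s_last) [right left]].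
  exists (run_partition s); last by rewrite listing_run_partition.
  by rewrite inE run_partition_almost_sm.
rewrite card_in_imset // => Q1 Q2; rewrite !inE => h1 h2 e.
by rewrite -(run_partition_listing h1) -(run_partition_listing h2) /= e.
Qed.

Section Trim.
Variable m : nat.
Local Notation n := m.+2.

Definition inner : {set 'I_n} := ~: [set ord0; ord_max].

Definition inner_sm_partitions := [set P : {set {set 'I_n}} |
  [&& cover P \subset inner, partition P (cover P) & strongly_monotone P]].

Definition zero_block (P : {set {set 'I_n}}) := ~: cover P :\ ord_max.
Definition extend (P : {set {set 'I_n}}) := zero_block P |: ([set ord_max] |: P).
Definition trim (Q : {set {set 'I_n}}) := Q :\ pblock Q ord0 :\ [set ord_max].

Lemma mem_inner x : (x \in inner) = (x != ord0) && (x != ord_max).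
Proof. by rewrite !inE negb_or. Qed.

Section Extend.
Variable P : {set {set 'I_n}}.
Hypothesis P_inner : P \in inner_sm_partitions.

Let P_cover : cover P \subset inner.
Proof. by move: P_inner; rewrite inE => /and3P []. Qed.
Let P_part : partition P (cover P).
Proof. by move: P_inner; rewrite inE => /and3P []. Qed.
Let P_sm : strongly_monotone P.
Proof. by move: P_inner; rewrite inE => /and3P []. Qed.

Lemma ord0_notin_cover : ord0 \notin cover P.
Proof. by apply: contraTN isT => /(subsetP P_cover); rewrite mem_inner eqxx. Qed.

Lemma ord_max_notin_cover : ord_max \notin cover P.
Proof. by apply: contraTN isT => /(subsetP P_cover); rewrite mem_inner eqxx andbF. Qed.

Lemma ord0_zero_block : ord0 \in zero_block P.
Proof. by rewrite !inE ord0_notin_cover andbT. Qed.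

Lemma zero_block_notin : zero_block P \notin P.
Proof.
apply: contraNN ord0_notin_cover => hP.
by apply/bigcupP; exists (zero_block P) => //; exact: ord0_zero_block.
Qed.

Lemma last_notin : [set ord_max] \notin P.
Proof.
by apply: contraNN ord_max_notin_cover => hP; apply/bigcupP; exists [set ord_max]; rewrite ?inE.
Qed.

Lemma extend_partition : partition (extend P) [set: 'I_n].
Proof.
have last_part : partition ([set ord_max] |: P) ([set ord_max] :|: cover P).
  by apply: partitionU1 P_part _ _; rewrite ?set1_neq0 ?disjoints1 ?ord_max_notin_cover.
have -> : [set: 'I_n] = zero_block P :|: ([set ord_max] :|: cover P).
  by apply/setP => x; rewrite !inE; case: eqP; case: (x \in cover P); rewrite ?orbT.
apply: partitionU1 last_part _ _; first by apply/set0Pn; exists ord0; exact: ord0_zero_block.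
rewrite -setI_eq0; apply/eqP/setP => x; rewrite !inE.
by case: (x == ord_max); case: (x \in cover P).
Qed.

Lemma pblock_extend0 : pblock (extend P) ord0 = zero_block P.
Proof.
apply: def_pblock (partition_trivIset extend_partition) _ ord0_zero_block.
by rewrite !inE eqxx.
Qed.

Lemma trim_extend : trim (extend P) = P.
Proof.
rewrite /trim pblock_extend0 /extend; apply/setP => B; rewrite !inE.
case: (eqVneq B (zero_block P)) => [-> | _]; first by rewrite /= andbF (negbTE zero_block_notin).
by case: (eqVneq B [set ord_max]) => [-> | _] //=; rewrite (negbTE last_notin).
Qed.

Lemma extend_almost_sm : almost_sm (extend P).
Proof.
rewrite /almost_sm extend_partition !inE eqxx orbT /=.
apply/forall_inP => B hB; apply/forall_inP => C hC; apply/implyP => /andP [h0 h].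
have neC : C != set0 by apply: partition_neq0 extend_partition hC.
move: hB hC; rewrite !inE.
case: (eqVneq B (zero_block P)) => [eB | _]; first by move: h0; rewrite eB ord0_zero_block.
case: (eqVneq B [set ord_max]) => [eB | _] /= hB.
  by have [x _ ex] := bmin_mem neC; move: h; rewrite eB bmin_set1 ex /=; have := ltn_ord x; lia.
have B_inner x : x \in B -> x < m.+1.
  move=> xB; have : x \in inner by apply: (subsetP P_cover); apply/bigcupP; exists B.
  by rewrite mem_inner ltn_ord_maxE => /andP [].
case: (eqVneq C (zero_block P)) => [eC | _] /=.
  by move: h; have := bmin_le ord0_zero_block; rewrite -eC /=; lia.
case: (eqVneq C [set ord_max]) => [-> | _] /= hC; first by rewrite bmax_set1; exact: bmax_le.
by move/forall_inP: P_sm => /(_ B hB) /forall_inP /(_ C hC) /implyP; apply.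
Qed.

End Extend.

Section Trimmed.
Variable Q : {set {set 'I_n}}.
Hypothesis Q_asm : almost_sm Q.

Let Q_part : partition Q [set: 'I_n].
Proof. by case/and3P: Q_asm. Qed.
Let Q_last : [set ord_max] \in Q.
Proof. by case/and3P: Q_asm. Qed.

Lemma pblock_last : pblock Q ord_max = [set ord_max].
Proof. exact: def_pblock (full_partition_triv Q_part) Q_last (set11 _). Qed.

Lemma pblock0_neq_last : pblock Q ord0 != [set ord_max].
Proof. by apply: contraTneq (mem_pblock_self Q_part ord0) => ->; rewrite inE. Qed.

Lemma trim_sub : trim Q \subset Q.
Proof. by apply/subsetP => B; rewrite !inE => /and3P []. Qed.

Lemma mem_trim B x : B \in trim Q -> x \in B ->
  [/\ B = pblock Q x, B != pblock Q ord0 & B != [set ord_max]].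
Proof.
rewrite !inE => /and3P [h1 h2 h3] hx.
by split => //; rewrite (def_pblock (full_partition_triv Q_part) h3 hx).
Qed.

Lemma trim_inner_sm : trim Q \in inner_sm_partitions.
Proof.
rewrite inE; apply/and3P; split.
- apply/subsetP => x /bigcupP [B hB hx]; have [e n1 n2] := mem_trim hB hx.
  rewrite mem_inner; apply/andP; split; apply/eqP => ex; subst x.
    by rewrite e eqxx in n1.
  by rewrite e pblock_last eqxx in n2.
- rewrite /partition eqxx (trivIsetS trim_sub (full_partition_triv Q_part)) /=.
  by apply: contraTN isT => /(subsetP trim_sub); rewrite (partition0 Q_part).
- apply/forall_inP => B hB; apply/forall_inP => C hC; apply/implyP => h.
  case/and3P: Q_asm => _ _ /forall_inP /(_ B (subsetP trim_sub _ hB)).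
  move/forall_inP/(_ C (subsetP trim_sub _ hC)); rewrite h andbT => /implyP; apply.
  by apply/negP => h0; have [e n1 _] := mem_trim hB h0; rewrite e eqxx in n1.
Qed.

Lemma zero_block_trim : zero_block (trim Q) = pblock Q ord0.
Proof.
apply/setP => x; rewrite !inE; apply/idP/idP => [/andP [x_max x_out] | x0].
  case: (eqVneq (pblock Q x) (pblock Q ord0)) => [<- | ne]; first exact: mem_pblock_self.
  case: (eqVneq (pblock Q x) [set ord_max]) => [e | ne'].
    by have := mem_pblock_self Q_part x; rewrite e inE (negbTE x_max).
  case/bigcupP: x_out; exists (pblock Q x); last exact: mem_pblock_self.
  by rewrite !inE ne ne' pblock_full_mem.
apply/andP; split.
  apply: contraTneq x0 => ->; apply: contraNN pblock0_neq_last.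
  by move/(pblock_of_mem Q_part) <-; rewrite pblock_last.
apply/bigcupP => -[B hB xB]; have [e n1 _] := mem_trim hB xB.
by move: n1; rewrite e (pblock_of_mem Q_part x0) eqxx.
Qed.

Lemma extend_trim : extend (trim Q) = Q.
Proof.
rewrite /extend zero_block_trim; apply/setP => B; rewrite !inE.
case: (eqVneq B (pblock Q ord0)) => [-> | _] /=; first by rewrite pblock_full_mem.
by case: (eqVneq B [set ord_max]) => [-> | _] /=.
Qed.

End Trimmed.

Lemma card_almost_sm_inner : #|[set Q : {set {set 'I_n}} | almost_sm Q]| = #|inner_sm_partitions|.
Proof.
have -> : [set Q : {set {set 'I_n}} | almost_sm Q] = extend @: inner_sm_partitions.
  apply/setP => Q; rewrite inE; apply/idP/imsetP => [hQ | [P hP ->]]; last exact: extend_almost_sm.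
  by exists (trim Q); rewrite ?trim_inner_sm ?extend_trim.
by rewrite card_in_imset // => P1 P2 h1 h2 e; rewrite -(trim_extend h1) -(trim_extend h2) e.
Qed.

End Trim.

Section Relabel.
Variables (N : nat) (U : {set 'I_N}).
Local Notation r := #|U|.
(* Unlike [fintype.enum_val], [Order.enum_val] enumerates [U] in increasing order. *)
Local Notation g := (@Order.enum_val _ _ (mem U)).
Implicit Types (B C : {set 'I_r}) (P : {set {set 'I_r}}).

Lemma relabel_leE (i j : 'I_r) : (g i <= g j) = (i <= j).
Proof. exact: (Order.le_enum_val (@Order.TotalTheory.le_total _ 'I_N) (A := mem U)). Qed.

Lemma relabel_ltE (i j : 'I_r) : (g i < g j) = (i < j).
Proof. by rewrite !ltnNge relabel_leE. Qed.

Lemma relabel_inj : injective g.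
Proof. exact: Order.enum_val_inj. Qed.

Lemma relabel_setT : g @: [set: 'I_r] = U.
Proof.
apply/eqP; rewrite eqEcard card_imset ?cardsT ?card_ord ?leqnn ?andbT; last exact: relabel_inj.
by apply/subsetP => x /imsetP [i _ ->]; exact: Order.enum_valP.
Qed.

Lemma bmin_relabel B : B != set0 -> exists2 u : 'I_r, bmin B = u & bmin (g @: B) = g u.
Proof.
move=> h; have [u uB eu] := bmin_mem h; exists u => //.
apply/eqP; rewrite eqn_leq (bmin_le (imset_f g uB)) /=.
apply: bmin_ge => [|x /imsetP [y yB ->]]; first by apply/set0Pn; exists (g u); exact: imset_f.
by rewrite relabel_leE -eu bmin_le.
Qed.

Lemma bmax_relabel B : B != set0 -> exists2 u : 'I_r, bmax B = u & bmax (g @: B) = g u.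
Proof.
move=> h; have [u uB eu] := bmax_mem h; exists u => //.
apply/eqP; rewrite eqn_leq (bmax_ge (imset_f g uB)) andbT.
by apply: bmax_le => x /imsetP [y yB ->]; rewrite relabel_leE -eu bmax_ge.
Qed.

Definition relabel P : {set {set 'I_N}} := [set g @: (B : {set 'I_r}) | B in P].

Lemma relabel_set_inj : injective relabel.
Proof. exact: imset_inj (imset_inj relabel_inj). Qed.

Lemma relabel_sm P : set0 \notin P -> strongly_monotone (relabel P) = strongly_monotone P.
Proof.
move=> P0.
have sm_pair B C : B \in P -> C \in P ->
    ((bmin (g @: B) < bmin (g @: C)) ==> (bmax (g @: B) < bmax (g @: C))) =
    ((bmin B < bmin C) ==> (bmax B < bmax C)).
  move=> hB hC; have nB : B != set0 by apply: contraNneq P0 => <-.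
  have nC : C != set0 by apply: contraNneq P0 => <-.
  have [u1 -> ->] := bmin_relabel nB; have [u2 -> ->] := bmin_relabel nC.
  have [v1 -> ->] := bmax_relabel nB; have [v2 -> ->] := bmax_relabel nC.
  by rewrite !relabel_ltE.
apply/forall_inP/forall_inP => H B hB; apply/forall_inP => C hC.
  by rewrite -sm_pair //; move/forall_inP: (H _ (imset_f _ hB)); apply; exact: imset_f.
case/imsetP: hB hC => B' hB' -> /imsetP [C' hC' ->].
by rewrite sm_pair //; move/forall_inP: (H _ hB'); apply.
Qed.

Lemma card_sm_partitions_of :
  #|[set P : {set {set 'I_N}} | partition P U && strongly_monotone P]| = A_sm r.
Proof.
rewrite /A_sm -(card_imset _ relabel_set_inj); apply: eq_card => P; rewrite inE.
apply/idP/imsetP => [/andP [hp hsm] | [P']]; last first.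
  rewrite inE => /andP [hp hsm] ->.
  rewrite -{1}relabel_setT imset_partition ?hp //=; last exact: relabel_inj.
  by rewrite relabel_sm // (partition0 hp).
pose P' : {set {set 'I_r}} := [set g @^-1: (B : {set 'I_N}) | B in P].
have g_preim (B : {set 'I_N}) : B \in P -> g @: (g @^-1: B) = B.
  move=> hB; apply/setP => x; apply/imsetP/idP => [[y] | hx]; first by rewrite inE => hy ->.
  have : x \in g @: [set: 'I_r] by rewrite relabel_setT; apply: (subsetP (partitionS hp hB)).
  by case/imsetP => y _ ex; exists y => //; rewrite inE -ex.
have relabel_P' : relabel P' = P.
  apply/setP => B; apply/imsetP/idP => [[B1 /imsetP [B' hB' ->] ->] | hB].
    by rewrite g_preim.
  by exists (g @^-1: B); [apply: imset_f | rewrite g_preim].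
have hp' : partition P' [set: 'I_r].
  by rewrite -(imset_partition _ _ relabel_inj) relabel_setT -/(relabel P') relabel_P'.
by exists P' => //; rewrite inE hp' /= -relabel_sm ?relabel_P' // (partition0 hp').
Qed.

End Relabel.

Lemma sum_subsets_by_card (T : finType) (S : {set T}) (F : nat -> nat) :
  \sum_(U : {set T} | U \subset S) F #|U| = \sum_(i < #|S|.+1) 'C(#|S|, i) * F i.
Proof.
have le_S (U : {set T}) : U \subset S -> #|U| < #|S|.+1 by rewrite ltnS; exact: subset_leq_card.
rewrite (partition_big (fun U : {set T} => inord #|U| : 'I_#|S|.+1) xpredT) //=.
apply: eq_bigr => i _; rewrite -cards_draws -sum_nat_const.
apply: eq_big => U.
  by rewrite inE; case hU: (U \subset S); rewrite // -val_eqE /= inordK ?le_S.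
by case/andP => /le_S hU /eqP <-; rewrite inordK.
Qed.

Lemma card_inner_sm_partitions m :
  #|inner_sm_partitions m| = \sum_(U : {set 'I_m.+2} | U \subset inner m) A_sm #|U|.
Proof.
rewrite -sum1_card (partition_big (fun P => cover P) (fun U => U \subset inner m)) /=; last first.
  by move=> P; rewrite inE => /and3P [].
apply: eq_bigr => U hU; rewrite -(card_sm_partitions_of U) -sum1_card; apply: eq_bigl => P.
rewrite !inE; apply/idP/idP => [/andP [/and3P [_ hp hsm] /eqP <-] | /andP [hp hsm]].
  by rewrite hp.
by rewrite (cover_partition hp) hU hp hsm eqxx.
Qed.

Lemma card_inner m : #|inner m| = m.
Proof.
have := cardsC [set (ord0 : 'I_m.+2); ord_max]; rewrite cards2 card_ord /=.
by move/eqP; rewrite -[m.+2]/(2 + m) eqn_add2l => /eqP.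
Qed.

Theorem theorem5p12 (n : nat) (hn : 2 <= n) :
  #|Av_cyc n| = \sum_(i < n.-1) 'C(n - 2, i) * A_sm i.
Proof.
case: n hn => [|[|m]] // _.
rewrite card_Av_cyc -card_almost_sm card_almost_sm_inner card_inner_sm_partitions.
by rewrite sum_subsets_by_card card_inner !subSS subn0.
Qed.
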